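(* Let $m\ge 2$ be fixed and assume (A1)–(A4). Let $X_{\mathbf 1}$ be the number of coupons collected by all $m$ collectors. Then: (i) if $a_1/n\to0$ and $a_2/n\to0$, then $\mathbb{E}(X_{\mathbf 1})\sim\operatorname{Var}(X_{\mathbf 1})$; (ii) if $a_1/n\to0$ and $a_2/n\to1$, then $\mathbb{E}(a_1-X_{\mathbf 1})\sim\operatorname{Var}(X_{\mathbf 1})$; (iii) if $a_1/n\to1$ and $a_2/n\to1$, then $\mathbb{E}\big(X_{\mathbf 1}+(m-1)n-\sum_{i=1}^m a_i\big)\sim\operatorname{Var}(X_{\mathbf 1})$. No assumption on convergence of $\operatorname{Var}(X_{\mathbf 1})$ is needed.
   Context: Coupon collector model: there are $n$ distinct coupons and $m$ collectors acting independently; collector $i$ collects a uniformly random subset of exactly $a_i$ distinct coupons, independently of the others. We consider a sequence of such models indexed by $n$, with $m$ fixed and $a_i=a_i(n)$, under the asymptotic assumptions: (A1) $n\to\infty$; (A2) $a_i\to\infty$ and $n-a_i\to\infty$ for each $i$; (A3) $1\le a_1\le a_2\le\cdots\le a_m\le n-1$; (A4) $a_i/n\to\alpha_i\in[0,1]$ for each $i$. $x_n\sim y_n$ means $x_n/y_n\to1$. *)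

From Stdlib Require Import Reals.
From mathcomp Require Import all_boot.

Set Implicit Arguments.
Unset Strict Implicit.
Unset Printing Implicit Defensive.

(* An outcome of the model with n coupons (the set 'I_n) and m collectors:
   collector i (i : 'I_m) holds the set S i of coupons. *)
Definition Sample (m n : nat) := {ffun 'I_m -> {set 'I_n}}.

(* Sample space: collector i holds exactly a i distinct coupons.
   The independent uniform choices give the uniform law on this set. *)
Definition samples (m n : nat) (a : nat -> nat) : {set Sample m n} :=
  [set S : Sample m n | [forall i : 'I_m, #|S i| == a i]].

Definition Expect (m n : nat) (a : nat -> nat) (f : Sample m n -> R) : R :=
  Rdiv (foldr Rplus R0 (map f (enum (samples m n a)))) (INR #|samples m n a|).

Definition Var (m n : nat) (a : nat -> nat) (f : Sample m n -> R) : R :=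
  Expect a (fun S => pow (Rminus (f S) (Expect a f)) 2).

Definition X1 (m n : nat) (S : Sample m n) : R :=
  INR #|\bigcap_(i < m) S i|.

Definition asym (u v : nat -> R) : Prop := Un_cv (fun n => Rdiv (u n) (v n)) R1.

(* A given coupon is held by collector i with probability r_i = a_i/n, and a
   second given coupon then with probability s_i = (a_i - 1)/(n - 1).  Hence
   E X = n P and E X^2 = n P + n (n - 1) P Q, with P = prod r_i and Q = prod s_i,
   so that Var X = n P rho with rho = 1 + (n - 1) Q - n P.
   Since 1 - s_i = (1 + mu) (1 - r_i) with mu = 1/(n - 1), an induction over the
   collectors gives mu Q (1 - P) <= P - Q <= mu (1 - P), and a second-order
   version for mu (1 - P) - (P - Q) in terms of F = P - 1 + sum (1 - r_i).
   Splitting off the smallest collector, with T the product of r_i over the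
   others, this yields (1 - T)(1 - r_1) <= rho <= 1 - T, which settles regimes
   (i) and (ii) (there E (a_1 - X) = a_1 (1 - T)); in regime (iii) it yields
   (1 + mu) Q F <= rho <= (1 + mu) F, while E (X + (m-1) n - sum a_i) = n F.
   In each regime Var X / mean is thus squeezed between sequences tending to 1. *)

From HB Require Import structures.
From Stdlib Require Import Reals Lra.
From Coquelicot Require Import Rbar Hierarchy Lim_seq.
Close Scope R_scope.
From mathcomp Require Import all_boot zify.

Set Implicit Arguments.
Unset Strict Implicit.
Unset Printing Implicit Defensive.

(* Complementation maps the c-supersets of T to the (n - c)-subsets of ~: T. *)
Lemma card_supersets n (T : {set 'I_n}) c : #|T| <= c <= n ->
  #|[set A : {set 'I_n} | T \subset A & #|A| == c]| = 'C(n - #|T|, c - #|T|).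
Proof.
case/andP=> Tc cn; rewrite -(card_preimset _ (@setC_inj 'I_n)).
have -> : @setC 'I_n @^-1: [set A : {set 'I_n} | T \subset A & #|A| == c] =
          [set B : {set 'I_n} | B \subset ~: T & #|B| == n - c].
  apply/setP=> B; rewrite !inE subsetC [#|~: B|]cardsCs setCK card_ord.
  congr (_ && _); have := max_card B; rewrite card_ord.
  by move=> Bn; apply/eqP/eqP; lia.
rewrite (cards_draws (~: T)) [#|~: T|]cardsCs setCK card_ord.
by rewrite -bin_sub; [congr 'C(_, _) | ]; lia.
Qed.

Lemma card_family_supersets m n (a : nat -> nat) (T : {set 'I_n}) :
    (forall i, i < m -> #|T| <= a i <= n) ->
  #|[set S in samples m n a | [forall i, T \subset S i]]| =
  \prod_(i <- iota 0 m) 'C(n - #|T|, a i - #|T|).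
Proof.
move=> Ta; pose F (i : 'I_m) := [set A : {set 'I_n} | T \subset A & #|A| == a i].
have -> : #|[set S in samples m n a | [forall i, T \subset S i]]| =
          #|family (fun i => mem (F i))|.
  apply: eq_card => S; rewrite !inE; apply/andP/familyP.
    by case=> /forallP Sa /forallP TS i; rewrite inE TS Sa.
  by move=> FS; split; apply/forallP=> i; have := FS i; rewrite inE => /andP[].
have -> : iota 0 m = index_iota 0 m by rewrite /index_iota subn0.
rewrite card_family foldrE big_map big_enum big_mkord /=.
by apply: eq_bigr => i _; rewrite -card_supersets // Ta.
Qed.

Lemma sum_nat_indicator (T : finType) (A : {set T}) (P : pred T) :
  \sum_(x in A) (P x : nat) = #|[set x in A | P x]|.
Proof.
rewrite -sum1_card big_mkcond [RHS]big_mkcond; apply: eq_bigr => x _.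
by rewrite !inE; case: (x \in A); case: (P x).
Qed.

Lemma card_sum_sub1set (T : finType) (B : {set T}) :
  #|B| = \sum_j ([set j] \subset B : nat).
Proof.
rewrite -sum1_card big_mkcond; apply: eq_bigr => j _.
by rewrite sub1set; case: (j \in B).
Qed.

Lemma card_sq_sum_sub2set (T : finType) (B : {set T}) :
  #|B| ^ 2 = \sum_j \sum_k ([set j; k] \subset B : nat).
Proof.
rewrite expnS expn1 {1}card_sum_sub1set big_distrl; apply: eq_bigr => j _.
rewrite card_sum_sub1set big_distrr; apply: eq_bigr => k _.
by rewrite subUset; case: ([set j] \subset B); case: ([set k] \subset B).
Qed.

Section CouponMoments.
Variables (m n : nat) (a : nat -> nat).
Local Notation D := (samples m n a).

Lemma sum_subset_bigcap (T : {set 'I_n}) :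
    (forall i, i < m -> #|T| <= a i <= n) ->
  \sum_(S in D) (T \subset \bigcap_(i < m) S i : nat) =
  \prod_(i <- iota 0 m) 'C(n - #|T|, a i - #|T|).
Proof.
move=> Ta; rewrite sum_nat_indicator -card_family_supersets //.
apply: eq_card => S; rewrite !inE; congr (_ && _).
by apply/bigcapsP/forallP => [TS i | TS i _]; apply: TS.
Qed.

Lemma sum_card_bigcap : (forall i, i < m -> 1 <= a i <= n) ->
  \sum_(S in D) #|\bigcap_(i < m) S i| = n * \prod_(i <- iota 0 m) 'C(n - 1, a i - 1).
Proof.
move=> Ha; under eq_bigr do rewrite card_sum_sub1set.
rewrite exchange_big /= (eq_bigr (fun _ => \prod_(i <- iota 0 m) 'C(n - 1, a i - 1))).
  by rewrite sum_nat_const card_ord.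
by move=> j _; rewrite sum_subset_bigcap cards1.
Qed.

Lemma sum_card_bigcap_sq : (forall i, i < m -> 2 <= a i <= n) ->
  \sum_(S in D) #|\bigcap_(i < m) S i| ^ 2 =
  n * \prod_(i <- iota 0 m) 'C(n - 1, a i - 1) +
  n * (n - 1) * \prod_(i <- iota 0 m) 'C(n - 2, a i - 2).
Proof.
move=> Ha; have pairs j :
    \sum_(S in D) \sum_k ([set j; k] \subset \bigcap_(i < m) S i : nat) =
    \prod_(i <- iota 0 m) 'C(n - 1, a i - 1) +
    (n - 1) * \prod_(i <- iota 0 m) 'C(n - 2, a i - 2).
  rewrite exchange_big (bigD1 j) //= setUid sum_subset_bigcap ?cards1; last first.
    by move=> i /Ha; lia.
  congr (_ + _); have -> : n - 1 = #|[pred k | k != j]| by rewrite cardC1 card_ord subn1.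
  rewrite -sum_nat_const.
  apply: eq_bigr => k kj; have jk : #|[set j; k]| = 2 by rewrite cards2 eq_sym kj.
  by rewrite sum_subset_bigcap jk // => i /Ha; rewrite jk.
under eq_bigr => S _ do rewrite (card_sq_sum_sub2set (\bigcap_(i < m) S i)).
by rewrite exchange_big (eq_bigr _ (fun j _ => pairs j)) sum_nat_const card_ord mulnDr mulnA.
Qed.

End CouponMoments.

Local Open Scope R_scope.

HB.instance Definition _ := Monoid.isComLaw.Build R 0 Rplus
  (fun x y z => esym (Rplus_assoc x y z)) Rplus_comm Rplus_0_l.
HB.instance Definition _ := Monoid.isComLaw.Build R 1 Rmult
  (fun x y z => esym (Rmult_assoc x y z)) Rmult_comm Rmult_1_l.
HB.instance Definition _ := Monoid.isMulLaw.Build R 0 Rmult Rmult_0_l Rmult_0_r.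
HB.instance Definition _ := Monoid.isAddLaw.Build R Rmult Rplus
  Rmult_plus_distr_r Rmult_plus_distr_l.

Notation "\sum_ ( i <- r ) F" := (\big[Rplus/0]_(i <- r) F) : R_scope.
Notation "\sum_ ( i 'in' A ) F" := (\big[Rplus/0]_(i in A) F) : R_scope.
Notation "\prod_ ( i <- r ) F" := (\big[Rmult/1]_(i <- r) F) : R_scope.

(* big_split with a bare Rmult in its statement, so that ring and field see it. *)
Lemma prodRM (I : Type) (r : seq I) (f g : I -> R) :
  \prod_(i <- r) (f i * g i) = \prod_(i <- r) f i * \prod_(i <- r) g i.
Proof. exact: big_split. Qed.

Lemma prodR_gt0 (I : eqType) (r : seq I) (f : I -> R) :
  {in r, forall i, 0 < f i} -> 0 < \prod_(i <- r) f i.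
Proof.
move=> f0; rewrite big_seq.
by apply: (big_ind (fun x => 0 < x)) => //; [lra | exact: Rmult_lt_0_compat].
Qed.

Lemma INR_subn p q : (q <= p)%N -> INR (p - q) = INR p - INR q.
Proof. by move/leP; exact: minus_INR. Qed.

Lemma INR_ltn p q : (p < q)%N -> INR p < INR q.
Proof. by move/ltP; exact: lt_INR. Qed.

Lemma INR_leqn p q : (p <= q)%N -> INR p <= INR q.
Proof. by move/leP; exact: le_INR. Qed.

Lemma ratio_in01 p q : (0 < p < q)%N -> 0 < INR p / INR q < 1.
Proof.
case/andP=> /INR_ltn p0 /INR_ltn pq; rewrite /= in p0.
split; first by apply: Rdiv_lt_0_compat; lra.
by apply: (Rmult_lt_reg_r (INR q)); [lra | rewrite /Rdiv Rmult_assoc Rinv_l; lra].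
Qed.

Lemma INR_sum (I : Type) (r : seq I) (P : pred I) (F : I -> nat) :
  INR (\sum_(i <- r | P i) F i)%N = \big[Rplus/0]_(i <- r | P i) INR (F i).
Proof. exact: (big_morph _ plus_INR). Qed.

Lemma INR_prod (I : Type) (r : seq I) (P : pred I) (F : I -> nat) :
  INR (\prod_(i <- r | P i) F i)%N = \big[Rmult/1]_(i <- r | P i) INR (F i).
Proof. exact: (big_morph _ mult_INR). Qed.

Lemma sumR_const (T : finType) (A : {pred T}) (c : R) :
  \sum_(i in A) c = INR #|A| * c.
Proof. by rewrite big_const; elim: #|A| => [|k IH]; rewrite ?iterS ?S_INR ?IH /=; ring. Qed.

Lemma INR_bin_pred n k : (0 < k)%N -> (0 < n)%N ->
  INR 'C(n - 1, k - 1) = INR k / INR n * INR 'C(n, k).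
Proof.
move=> k0 n0; rewrite !subn1; have := mul_bin_diag n k.-1.
rewrite prednK // => /(congr1 INR); rewrite !mult_INR => e.
have n0R : INR n <> 0 by apply: not_0_INR; lia.
by apply: (Rmult_eq_reg_l (INR n)) => //; rewrite e; field.
Qed.

Lemma INR_bin_pred2 n k : (1 < k)%N -> (1 < n)%N ->
  INR 'C(n - 2, k - 2) =
  INR k / INR n * ((INR k - 1) / (INR n - 1)) * INR 'C(n, k).
Proof.
move=> k1 n1; have -> : (n - 2 = n - 1 - 1)%N by lia.
have -> : (k - 2 = k - 1 - 1)%N by lia.
rewrite !INR_bin_pred ?subn_gt0 //; try lia.
rewrite !INR_subn; try lia.
have nR : 1 < INR n by apply: (INR_ltn (p := 1)).
rewrite /=; field; lra.
Qed.

Section Expectation.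
Variables (m n : nat) (a : nat -> nat).
Local Notation D := (samples m n a).
Implicit Types f g : Sample m n -> R.

Lemma ExpectE f : Expect a f = (\sum_(S in D) f S) / INR #|D|.
Proof. by rewrite /Expect foldrE big_map big_enum. Qed.

Lemma eq_Expect f g : f =1 g -> Expect a f = Expect a g.
Proof. by move=> fg; rewrite !ExpectE (eq_bigr _ (fun S _ => fg S)). Qed.

Lemma ExpectD f g : Expect a (fun S => f S + g S) = Expect a f + Expect a g.
Proof. by rewrite !ExpectE big_split /=; rewrite /Rdiv; ring. Qed.

Lemma ExpectZ c f : Expect a (fun S => c * f S) = c * Expect a f.
Proof. by rewrite !ExpectE -big_distrr /=; rewrite /Rdiv; ring. Qed.

Hypothesis D_gt0 : (0 < #|D|)%N.

Lemma Expect_cst c : Expect a (fun _ : Sample m n => c) = c.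
Proof.
rewrite ExpectE sumR_const; field; apply: not_0_INR; lia.
Qed.

Lemma Expect_affine c d f : Expect a (fun S => c + d * f S) = c + d * Expect a f.
Proof. by rewrite ExpectD Expect_cst ExpectZ. Qed.

Lemma VarE f : Var a f = Expect a (fun S => f S ^ 2) - Expect a f ^ 2.
Proof.
rewrite /Var; set E := Expect a f.
rewrite (@eq_Expect _ (fun S => E ^ 2 + (-2 * E * f S + f S ^ 2))); last by move=> S; ring.
by rewrite !ExpectD Expect_cst ExpectZ -/E; ring.
Qed.

End Expectation.

Section CouponMomentsReal.
Variables (m n : nat) (a : nat -> nat).
Local Notation D := (samples m n a).
Local Notation P := (\prod_(i <- iota 0 m) (INR (a i) / INR n)).
Local Notation Q := (\prod_(i <- iota 0 m) ((INR (a i) - 1) / (INR n - 1))).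

Hypothesis a_le : forall i, (i < m)%N -> (a i <= n)%N.

Lemma card_samples :
  #|D| = (\prod_(i <- iota 0 m) 'C(n, a i))%N.
Proof.
have := @card_family_supersets m n a set0.
rewrite cards0 (eq_bigr (fun i => 'C(n, a i))) => [<- | i _]; last by rewrite !subn0.
  apply: eq_card => S; rewrite !inE [X in _ && X](_ : _ = true) ?andbT //.
  by apply/forallP => i; exact: sub0set.
by move=> i /a_le.
Qed.

Let prod_INR_bin_neq0 : \prod_(i <- iota 0 m) INR 'C(n, a i) <> 0.
Proof.
apply: Rgt_not_eq; apply: prodR_gt0 => i; rewrite mem_iota => /andP[_ im].
by apply: lt_0_INR; apply/ltP; rewrite bin_gt0 a_le.
Qed.

Lemma prod_INR_bin_pred : (0 < n)%N -> (forall i, (i < m)%N -> (0 < a i)%N) ->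
  \prod_(i <- iota 0 m) INR 'C(n - 1, a i - 1) =
  P * \prod_(i <- iota 0 m) INR 'C(n, a i).
Proof.
move=> n0 a0; rewrite -prodRM; apply: eq_big_seq => i.
by rewrite mem_iota => /andP[_ /a0 ai]; apply: INR_bin_pred.
Qed.

Lemma prod_INR_bin_pred2 : (1 < n)%N -> (forall i, (i < m)%N -> (1 < a i)%N) ->
  \prod_(i <- iota 0 m) INR 'C(n - 2, a i - 2) =
  P * Q * \prod_(i <- iota 0 m) INR 'C(n, a i).
Proof.
move=> n1 a1; rewrite -!prodRM; apply: eq_big_seq => i.
by rewrite mem_iota => /andP[_ /a1 ai]; apply: INR_bin_pred2.
Qed.

Lemma Expect_X1 : (0 < n)%N -> (forall i, (i < m)%N -> (0 < a i)%N) ->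
  Expect a (@X1 m n) = INR n * P.
Proof.
move=> n0 a0; rewrite ExpectE /X1 -INR_sum sum_card_bigcap; last first.
  by move=> i im; rewrite a0 ?a_le.
rewrite card_samples mult_INR !INR_prod prod_INR_bin_pred //.
by field.
Qed.

Lemma Expect_X1_sq : (1 < n)%N -> (forall i, (i < m)%N -> (1 < a i)%N) ->
  Expect a (fun S : Sample m n => X1 S ^ 2) = INR n * P + INR n * (INR n - 1) * (P * Q).
Proof.
move=> n1 a1; have a0 i : (i < m)%N -> (0 < a i)%N by move/a1; lia.
rewrite (@eq_Expect _ _ _ _ (fun S => INR (#|\bigcap_(i < m) S i| ^ 2))); last first.
  by move=> S; rewrite /X1 expnS expn1 mult_INR /=; ring.
rewrite ExpectE -INR_sum sum_card_bigcap_sq; last by move=> i im; rewrite a1 ?a_le.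
rewrite card_samples plus_INR !mult_INR INR_subn; last by lia.
rewrite !INR_prod.
rewrite prod_INR_bin_pred ?prod_INR_bin_pred2 //; last by lia.
by rewrite /=; field.
Qed.

Lemma card_samples_gt0 : (0 < #|D|)%N.
Proof.
rewrite card_samples big_seq prodn_cond_gt0 // => i.
by rewrite mem_iota bin_gt0 => /andP[_ /a_le].
Qed.

Lemma Var_X1 : (1 < n)%N -> (forall i, (i < m)%N -> (1 < a i)%N) ->
  Var a (@X1 m n) = INR n * P * (1 + (INR n - 1) * Q - INR n * P).
Proof.
move=> n1 a1; rewrite VarE ?card_samples_gt0 // Expect_X1_sq // Expect_X1 //.
- by ring.
- by lia.
- by move=> i /a1; lia.
Qed.

End CouponMomentsReal.

Section ProductBounds.
Variables (I : eqType) (f g : I -> R).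

Lemma prodR_in01 (l : seq I) : {in l, forall i, 0 <= f i <= 1} ->
  0 <= \prod_(i <- l) f i <= 1.
Proof.
move=> f01; rewrite big_seq; apply: (big_ind (fun x => 0 <= x <= 1)) => //.
- lra.
- by move=> x y x01 y01; split; nra.
Qed.

Lemma prodR_le_factor (l : seq I) j : {in l, forall i, 0 <= f i <= 1} -> j \in l ->
  \prod_(i <- l) f i <= f j.
Proof.
elim: l => // i l IH f01; rewrite inE big_cons.
have [fi0 fi1] := f01 i (mem_head i l).
have f01' : {in l, forall i, 0 <= f i <= 1}.
  by move=> k kl; apply: f01; rewrite inE kl orbT.
have [P0 P1] := prodR_in01 f01'.
case/orP=> [/eqP-> | jl]; first nra.
have := IH f01' jl; have [fj0 fj1] := f01' j jl; nra.
Qed.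

Lemma prodR_sub_le_sum (l : seq I) : {in l, forall i, 0 <= g i <= f i /\ f i <= 1} ->
  0 <= \prod_(i <- l) g i <= \prod_(i <- l) f i /\
  \prod_(i <- l) f i - \prod_(i <- l) g i <= \sum_(i <- l) (f i - g i).
Proof.
elim: l => [|i l IH] fg; first by rewrite !big_nil; lra.
have fg' : {in l, forall i, 0 <= g i <= f i /\ f i <= 1}.
  by move=> k kl; apply: fg; rewrite inE kl orbT.
have [[g0 gf] f1] := fg i (mem_head i l).
have [[Q0 QP] PQ] := IH fg'.
have [_ P1] : 0 <= \prod_(i <- l) f i <= 1.
  by apply: prodR_in01 => k /fg' [[? ?] ?]; lra.
rewrite !big_cons; split; first split; nra.
Qed.

End ProductBounds.

Lemma one_sub_prodR_le_sum (I : eqType) (l : seq I) (f : I -> R) :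
  {in l, forall i, 0 <= f i <= 1} -> 1 - \prod_(i <- l) f i <= \sum_(i <- l) (1 - f i).
Proof.
move=> f01; have [|_] := @prodR_sub_le_sum _ (fun _ => 1) f l; last by rewrite big1.
by move=> i /f01; lra.
Qed.

Lemma prodR_defect_gt0 (I : eqType) (i j : I) (l : seq I) (f : I -> R) :
  {in [:: i, j & l], forall k, 0 <= f k <= 1} -> f i < 1 -> f j < 1 ->
  0 < \prod_(k <- [:: i, j & l]) f k - 1 + \sum_(k <- [:: i, j & l]) (1 - f k).
Proof.
move=> f01 fi1 fj1; have f01' : {in l, forall k, 0 <= f k <= 1}.
  by move=> k kl; apply: f01; rewrite !inE kl !orbT.
have := one_sub_prodR_le_sum f01'; have [P0 P1] := prodR_in01 f01'.
have [fi0 _] := f01 i (mem_head _ _).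
have [fj0 _] : 0 <= f j <= 1 by apply: f01; rewrite !inE eqxx orbT.
have h1 : 0 < (1 - f i) * (1 - f j) by apply: Rmult_lt_0_compat; lra.
have h2 : 0 <= (1 - \prod_(k <- l) f k) * (1 - f i * f j) by apply: Rmult_le_pos; nra.
rewrite !big_cons; nra.
Qed.

(* In the coupon model r i = a_i/n, s i = (a_i - 1)/(n - 1) and mu = 1/(n - 1). *)
Section ShiftedProducts.
Variables (I : eqType) (mu : R) (r s : I -> R).
Hypothesis mu_ge0 : 0 <= mu.
Hypothesis s_def : forall i, s i = 1 - (1 + mu) * (1 - r i).

Local Notation P l := (\prod_(i <- l) r i).
Local Notation Q l := (\prod_(i <- l) s i).

Lemma shifted_prod_first_order (l : seq I) : {in l, forall i, 0 <= s i /\ r i <= 1} ->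
  [/\ 0 <= Q l <= P l, P l <= 1 & mu * Q l * (1 - P l) <= P l - Q l <= mu * (1 - P l)].
Proof.
elim: l => [|i l IH] rs; first by rewrite !big_nil; split; lra.
have [si0 ri1] := rs i (mem_head i l).
have /IH[[Q0 QP] P1 [lo up]] : {in l, forall i, 0 <= s i /\ r i <= 1}.
  by move=> k kl; apply: rs; rewrite inE kl orbT.
rewrite !big_cons; move: Q0 QP P1 lo up; set p := P l; set q := Q l => Q0 QP P1 lo up.
have sr : s i = r i - mu * (1 - r i) by rewrite s_def; ring.
have sri : s i <= r i.
  have : 0 <= mu * (1 - r i) by apply: Rmult_le_pos; lra.
  lra.
have e : r i * p - s i * q = r i * (p - q) + mu * (1 - r i) * q by rewrite sr; ring.
split; [split; nra | nra | split].
- have h1 : r i * (mu * q * (1 - p)) <= r i * (p - q) by apply: Rmult_le_compat_l; lra.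
  have h2 : 0 <= mu * q * (1 - r i * p) by apply: Rmult_le_pos; nra.
  nra.
- have h1 : r i * (p - q) <= r i * (mu * (1 - p)) by apply: Rmult_le_compat_l; lra.
  have h2 : mu * (1 - r i) * q <= mu * (1 - r i) by nra.
  nra.
Qed.

Local Notation F l := (P l - 1 + \sum_(i <- l) (1 - r i)).
Local Notation D l := (mu * (1 - P l) - (P l - Q l)).

Lemma shifted_prod_second_order (l : seq I) : {in l, forall i, 0 <= s i /\ r i <= 1} ->
  (1 + mu) * mu * Q l * F l <= D l <= (1 + mu) * mu * F l.
Proof.
elim: l => [|i l IH] rs; first by rewrite !big_nil; lra.
have [si0 ri1] := rs i (mem_head i l).
have rs' : {in l, forall i, 0 <= s i /\ r i <= 1}.
  by move=> k kl; apply: rs; rewrite inE kl orbT.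
have [[Q0 QP] P1 [lo up]] := shifted_prod_first_order rs'.
have F0 : 0 <= F l.
  suff : 1 - P l <= \sum_(i <- l) (1 - r i) by lra.
  apply: one_sub_prodR_le_sum => k /rs' [sk0 rk1]; split => //.
  have := s_def k; nra.
have [IHlo IHup] := IH rs'.
rewrite !big_cons; move: Q0 QP P1 lo up F0 IHlo IHup.
set p := P l; set q := Q l; set t := \sum_(i <- l) (1 - r i) => Q0 QP P1 lo up F0 IHlo IHup.
have sr : s i = r i - mu * (1 - r i) by rewrite s_def; ring.
have ri0 : 0 <= 1 - r i by lra.
have c0 : 0 <= (1 + mu) * (1 - r i) by apply: Rmult_le_pos; lra.
have eF : r i * p - 1 + (1 - r i + t) = (p - 1 + t) + (1 - r i) * (1 - p) by ring.
have eD : mu * (1 - r i * p) - (r i * p - s i * q) =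
          (mu * (1 - p) - (p - q)) + (1 + mu) * (1 - r i) * (p - q) by rewrite sr; ring.
rewrite eF eD; split.
- have h1 : (1 + mu) * (1 - r i) * (mu * q * (1 - p)) <= (1 + mu) * (1 - r i) * (p - q).
    exact: Rmult_le_compat_l.
  have h2 : 0 <= (1 + mu) * mu * q * (p - 1 + t + (1 - r i) * (1 - p)).
    apply: Rmult_le_pos; [apply: Rmult_le_pos; nra | nra].
  have h3 : s i <= 1 by nra.
  nra.
- have h1 : (1 + mu) * (1 - r i) * (p - q) <= (1 + mu) * (1 - r i) * (mu * (1 - p)).
    exact: Rmult_le_compat_l.
  nra.
Qed.

End ShiftedProducts.

Section VarianceFactor.
Variables (I : eqType) (x : R) (r s : I -> R).
Hypothesis x_gt1 : 1 < x.
Hypothesis s_def : forall i, s i = (x * r i - 1) / (x - 1).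

Local Notation P l := (\prod_(i <- l) r i).
Local Notation Q l := (\prod_(i <- l) s i).

Let mu_ge0 : 0 <= / (x - 1).
Proof. by apply: Rlt_le; apply: Rinv_0_lt_compat; lra. Qed.

Let s_shift i : s i = 1 - (1 + / (x - 1)) * (1 - r i).
Proof. by rewrite s_def; field; lra. Qed.

Lemma variance_factor_head (i0 : I) (l : seq I) :
    {in i0 :: l, forall i, 0 <= s i /\ r i <= 1} ->
  (1 - P l) * (1 - r i0) <= 1 + (x - 1) * Q (i0 :: l) - x * P (i0 :: l) <= 1 - P l.
Proof.
move=> rs; have [s00 r01] := rs i0 (mem_head i0 l).
have rs' : {in l, forall i, 0 <= s i /\ r i <= 1}.
  by move=> k kl; apply: rs; rewrite inE kl orbT.
have [[Q0 QP] P1 [_ up]] := shifted_prod_first_order mu_ge0 s_shift rs'.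
rewrite !big_cons; move: Q0 QP P1 up; set p := P l; set q := Q l => Q0 QP P1 up.
have xr : x * r i0 - 1 = (x - 1) * s i0 by rewrite s_def; field; lra.
have e : 1 + (x - 1) * (s i0 * q) - x * (r i0 * p) = (1 - p) - (x * r i0 - 1) * (p - q).
  by rewrite s_def; field; lra.
have up' : (x - 1) * (p - q) <= 1 - p.
  have := Rmult_le_compat_l (x - 1) _ _ ltac:(lra) up.
  by rewrite -Rmult_assoc Rinv_r ?Rmult_1_l; lra.
have sr : s i0 <= r i0 by have := s_shift i0; have := mu_ge0; nra.
have h1 : 0 <= (x * r i0 - 1) * (p - q) <= s i0 * (1 - p).
  rewrite xr (_ : _ * _ * _ = s i0 * ((x - 1) * (p - q))); last by ring.
  by split; [apply: Rmult_le_pos; nra | apply: Rmult_le_compat_l].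
have h2 : s i0 * (1 - p) <= r i0 * (1 - p) by apply: Rmult_le_compat_r; lra.
by rewrite e; split; nra.
Qed.

Lemma variance_factor_second_order (l : seq I) :
    {in l, forall i, 0 <= s i /\ r i <= 1} ->
  let F := P l - 1 + \sum_(i <- l) (1 - r i) in
  (1 + / (x - 1)) * Q l * F <= 1 + (x - 1) * Q l - x * P l <= (1 + / (x - 1)) * F.
Proof.
move=> rs F; have [lo up] := shifted_prod_second_order mu_ge0 s_shift rs.
move: lo up; rewrite -/F; set k := / (x - 1); set p := P l; set q := Q l => lo up.
have xk : (x - 1) * k = 1 by rewrite /k Rinv_r; lra.
have e : 1 + (x - 1) * q - x * p = (x - 1) * (k * (1 - p) - (p - q)).
  by rewrite Rmult_minus_distr_l -Rmult_assoc xk; ring.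
have x1 : 0 <= x - 1 by lra.
rewrite e; split.
- have := Rmult_le_compat_l _ _ _ x1 lo.
  have -> : (x - 1) * ((1 + k) * k * q * F) = (1 + k) * q * F * ((x - 1) * k) by ring.
  by rewrite xk; lra.
- have := Rmult_le_compat_l _ _ _ x1 up.
  have -> : (x - 1) * ((1 + k) * k * F) = (1 + k) * F * ((x - 1) * k) by ring.
  by rewrite xk; lra.
Qed.

End VarianceFactor.

Lemma eventually_forall_ltn m (P : nat -> nat -> Prop) :
  (forall i, (i < m)%N -> eventually (P i)) ->
  eventually (fun n => forall i, (i < m)%N -> P i n).
Proof.
elim: m => [|m IH] ev; first by apply: filter_forall => n i.
apply: filter_imp (filter_and _ _ (IH (fun i im => ev i (ltnW im))) (ev m (ltnSn m))).
by move=> n [Pi Pm] i; rewrite ltnS leq_eqVlt => /orP[/eqP-> | /Pi].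
Qed.

Lemma is_lim_seq_prod1 (I : eqType) (l : seq I) (f : nat -> I -> R) :
  {in l, forall i, is_lim_seq (fun n => f n i) 1} ->
  is_lim_seq (fun n => \prod_(i <- l) f n i) 1.
Proof.
elim: l => [|i l IH] f1.
  by apply: is_lim_seq_ext (is_lim_seq_const 1) => n; rewrite big_nil.
apply: is_lim_seq_ext (fun n => esym (big_cons _ _ _ _ _ _)) _.
have IHl : is_lim_seq (fun n => \prod_(j <- l) f n j) 1.
  by apply: IH => k kl; apply: f1; rewrite inE kl orbT.
by have := is_lim_seq_mult' _ _ _ _ (f1 i (mem_head i l)) IHl; rewrite Rmult_1_l.
Qed.

Lemma asym_of_bounds (E V L U : nat -> R) :
  eventually (fun n => 0 < E n /\ L n * E n <= V n <= U n * E n) ->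
  is_lim_seq L 1 -> is_lim_seq U 1 -> asym E V.
Proof.
move=> bnd L1 U1; rewrite /asym -is_lim_seq_Reals.
have VE1 : is_lim_seq (fun n => V n / E n) 1.
  apply: is_lim_seq_le_le_loc L1 U1; apply: filter_imp bnd => n [E0 [lo up]].
  split; [apply: (Rmult_le_reg_r (E n)) | apply: (Rmult_le_reg_r (E n))] => //;
    by rewrite /Rdiv Rmult_assoc Rinv_l ?Rmult_1_r; lra.
have := is_lim_seq_inv _ _ VE1 ltac:(by case; lra).
by rewrite /= Rinv_1; apply: is_lim_seq_ext => n; rewrite Rinv_div.
Qed.

Lemma is_lim_seq_one_sub (u : nat -> R) (l : R) :
  is_lim_seq u l -> is_lim_seq (fun n => 1 - u n) (1 - l).
Proof. exact: is_lim_seq_minus' (is_lim_seq_const 1). Qed.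

Lemma is_lim_seq_mult1 (u v : nat -> R) :
  is_lim_seq u 1 -> is_lim_seq v 1 -> is_lim_seq (fun n => u n * v n) 1.
Proof. by move=> u1 v1; have := is_lim_seq_mult' _ _ _ _ u1 v1; rewrite Rmult_1_l. Qed.

Lemma is_lim_seq_inv_pred : is_lim_seq (fun n => / (INR n - 1)) 0.
Proof.
have pinf : is_lim_seq (fun n => INR n - 1) p_infty.
  by apply: (is_lim_seq_minus _ _ _ _ _ is_lim_seq_INR (is_lim_seq_const 1)).
exact: (is_lim_seq_inv _ _ pinf).
Qed.

Definition admissible (m : nat) (a : nat -> nat -> nat) (n : nat) : Prop :=
  [/\ (2 <= n)%N, forall i, (i < m)%N -> (2 <= a i n <= n - 1)%N &
      forall i j, (i <= j < m)%N -> (a i n <= a j n)%N].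

Lemma eventually_admissible m (a : nat -> nat -> nat) : (0 < m)%N ->
  (forall i, (i < m)%N -> cv_infty (fun n => INR (a i n))) ->
  (exists N, forall n, (N <= n)%N ->
     (forall i, (i.+1 < m)%N -> (a i n <= a i.+1 n)%N) /\ (a (m - 1) n <= n - 1)%N) ->
  eventually (admissible m a).
Proof.
move=> m0 a_infty [N sorted].
have a_ge2 : eventually (fun n => forall i, (i < m)%N -> (2 <= a i n)%N).
  apply: eventually_forall_ltn => i /a_infty /(_ 1) [M aM]; exists M => n /aM ai.
  by apply/ltP; apply: INR_lt; rewrite /=; lra.
have a_sorted : eventually (fun n =>
    (forall i, (i.+1 < m)%N -> (a i n <= a i.+1 n)%N) /\ (a (m - 1) n <= n - 1)%N).
  by exists N => n /leP; exact: sorted.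
apply: filter_imp (filter_and _ _ a_ge2 a_sorted).
move=> n [a2 [step last]].
have mono : forall i j, (i <= j < m)%N -> (a i n <= a j n)%N.
  move=> i j /andP[ij jm].
  apply: (@homo_leq_in _ [pred k | k < m]%N (fun k => a k n) (fun x y => x <= y)%N
    leqnn (fun y x z => @leq_trans y x z)) => //=.
  - by move=> k l _ lm p /andP[_ pl]; apply: ltn_trans lm.
  - by move=> k _; exact: step.
  - exact: leq_ltn_trans jm.
have top i : (i < m)%N -> (a i n <= n - 1)%N.
  by move=> im; apply: leq_trans last; apply: mono; lia.
split => // [|i im]; last by rewrite a2 ?top.
by have := a2 0%N m0; have := top 0%N m0; lia.
Qed.

Lemma sum_one_sub_ratio (I : Type) (l : seq I) (f : I -> R) (x : R) : x <> 0 ->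
  x * \sum_(i <- l) (1 - f i / x) = INR (size l) * x - \sum_(i <- l) f i.
Proof.
move=> x0; elim: l => [|i l IH]; first by rewrite !big_nil /=; ring.
rewrite !big_cons (_ : size (i :: l) = (size l).+1) // S_INR.
by rewrite Rmult_plus_distr_l IH; field.
Qed.

Section CouponAsymptotics.
Variables (m : nat) (a : nat -> nat -> nat).
Hypothesis m_ge2 : (2 <= m)%N.
Hypothesis a_adm : eventually (admissible m a).

Local Notation J := (iota 2 (m - 2)).
Local Notation r n i := (INR (a i%N n) / INR n).
Local Notation s n i := ((INR (a i%N n) - 1) / (INR n - 1)).
Local Notation P n := (\prod_(i <- [:: 0, 1 & J]%N) r n i).
Local Notation Q n := (\prod_(i <- [:: 0, 1 & J]%N) s n i).
Local Notation T n := (\prod_(i <- 1%N :: J) r n i).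
Local Notation E n := (Expect (fun i => a i n) (@X1 m n)).
Local Notation V n := (Var (fun i => a i n) (@X1 m n)).

Let iota_m : iota 0 m = [:: 0, 1 & J]%N.
Proof. by case: m m_ge2 => [|[|k]] //= _; rewrite subSS subSS subn0. Qed.

Lemma eventually_coupon_moments : eventually (fun n => [/\
  (0 < #|samples m n (fun i => a i n)|)%N, E n = INR n * P n &
  V n = INR n * P n * (1 + (INR n - 1) * Q n - INR n * P n)]).
Proof.
apply: filter_imp a_adm => n [n2 a_rng _].
have a_le i : (i < m)%N -> (a i n <= n)%N by move/a_rng; lia.
rewrite -iota_m; split.
- exact: card_samples_gt0.
- by apply: Expect_X1 => // [|i /a_rng]; lia.
- by apply: Var_X1 => // i /a_rng; lia.
Qed.

Lemma eventually_coupon_ratios : eventually (fun n => [/\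
  1 < INR n, forall i, s n i = (INR n * r n i - 1) / (INR n - 1) &
  {in [:: 0, 1 & J]%N, forall i,
    [/\ 0 < r n i < 1, 0 <= s n i, r n 0 <= r n i & (0 < i)%N -> r n 1 <= r n i]}]).
Proof.
apply: filter_imp a_adm => n [n2 a_rng a_mono].
have n1 : 1 < INR n by apply: (INR_ltn (p := 1)).
have inv_gt0 : 0 <= / INR n by apply: Rlt_le; apply: Rinv_0_lt_compat; lra.
split => // [i | i]; first by field; lra.
rewrite -iota_m mem_iota => /andP[_ im]; have /andP[ai2 ain] := a_rng i im.
split.
- by apply: ratio_in01; lia.
- apply: Rmult_le_pos; last by apply: Rlt_le; apply: Rinv_0_lt_compat; lra.
  by have := INR_leqn (ltnW ai2); rewrite /=; lra.
- by apply: Rmult_le_compat_r => //; apply: INR_leqn; apply: a_mono; lia.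
- by move=> i0; apply: Rmult_le_compat_r => //; apply: INR_leqn; apply: a_mono; lia.
Qed.

Let eventually_tail_bounds : eventually (fun n => 0 <= T n <= r n 1).
Proof.
apply: filter_imp eventually_coupon_ratios => n [_ _ rng].
have r01 : {in 1%N :: J, forall i, 0 <= r n i <= 1}.
  by move=> i iJ; have [[? ?] _ _ _] := rng i (@mem_behead _ [:: 0, 1 & J]%N i iJ); lra.
by have [T0 _] := prodR_in01 r01; split => //; apply: prodR_le_factor; rewrite ?mem_head.
Qed.

Lemma asym_Var_X1_sparse :
  is_lim_seq (fun n => r n 0) 0 -> is_lim_seq (fun n => r n 1) 0 ->
  asym (fun n => E n) (fun n => V n).
Proof.
move=> r0 r1; have T0 : is_lim_seq (fun n => T n) 0.
  exact: is_lim_seq_le_le_loc (is_lim_seq_const 0) r1.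
apply: (@asym_of_bounds _ _ (fun n => (1 - T n) * (1 - r n 0)) (fun n => 1 - T n)).
- apply: filter_imp (filter_and _ _ eventually_coupon_moments eventually_coupon_ratios).
  move=> n [[_ -> ->] [n1 s_def rng]].
  have rs : {in [:: 0, 1 & J]%N, forall i, 0 <= s n i /\ r n i <= 1}.
    by move=> i /rng [[_ ?] ? _ _]; split; lra.
  have P0 : 0 < INR n * P n.
    by apply: Rmult_lt_0_compat; [lra | apply: prodR_gt0 => i /rng [[]]].
  have [lo hi] := variance_factor_head n1 s_def rs.
  split => //; split; rewrite (Rmult_comm _ (INR n * P n));
    exact: Rmult_le_compat_l (Rlt_le _ _ P0) _.
- by have := is_lim_seq_mult' _ _ _ _ (is_lim_seq_one_sub T0) (is_lim_seq_one_sub r0);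
    rewrite Rminus_0_r Rmult_1_l.
- by have := is_lim_seq_one_sub T0; rewrite Rminus_0_r.
Qed.

Let ratio_lim1 j i : i \in [:: 0, 1 & J]%N -> is_lim_seq (fun n => r n j) 1 ->
  eventually (fun n => r n j <= r n i) -> is_lim_seq (fun n => r n i) 1.
Proof.
move=> iJ rj1 rji; apply: is_lim_seq_le_le_loc rj1 (is_lim_seq_const 1).
apply: filter_imp (filter_and _ _ rji eventually_coupon_ratios).
by move=> n [ji [_ _ /(_ i iJ) [[_ ?] _ _ _]]]; split; lra.
Qed.

Lemma asym_Var_X1_mixed :
  is_lim_seq (fun n => r n 0) 0 -> is_lim_seq (fun n => r n 1) 1 ->
  asym (fun n => Expect (fun i => a i n) (fun S : Sample m n => INR (a 0%N n) - X1 S))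
       (fun n => V n).
Proof.
move=> r0 r1; have T1 : is_lim_seq (fun n => T n) 1.
  apply: is_lim_seq_prod1 => i iJ; have iJ' := @mem_behead _ [:: 0, 1 & J]%N i iJ.
  apply: (ratio_lim1 iJ' r1).
  apply: filter_imp eventually_coupon_ratios => n [_ _ /(_ i iJ') [_ _ _]]; apply.
  by move: iJ; rewrite inE mem_iota; clear iJ'; case: i.
apply: (@asym_of_bounds _ _ (fun n => T n * (1 - r n 0)) (fun n => T n)).
- apply: filter_imp (filter_and _ _ eventually_tail_bounds
    (filter_and _ _ eventually_coupon_moments eventually_coupon_ratios)).
  move=> n [[T0 Tr1] [[D0 EX ->] [n1 s_def rng]]].
  have rs : {in [:: 0, 1 & J]%N, forall i, 0 <= s n i /\ r n i <= 1}.
    by move=> i /rng [[_ ?] ? _ _]; split; lra.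
  have [lo hi] := variance_factor_head n1 s_def rs.
  have [[r00 _] _ _ _] := rng 0%N isT.
  have [[_ r11] _ _ _] := rng 1%N isT.
  have c0 : 0 < INR n * r n 0 by apply: Rmult_lt_0_compat; lra.
  have EP : INR n * P n = INR n * r n 0 * T n by rewrite big_cons; ring.
  have E' : INR (a 0%N n) + -1 * (INR n * P n) = INR n * r n 0 * (1 - T n).
    by rewrite EP; field; lra.
  rewrite (@eq_Expect _ _ _ _ (fun S => INR (a 0%N n) + -1 * X1 S)); last by move=> S; ring.
  rewrite Expect_affine // EX E' EP; rewrite EP in lo hi.
  have cT : 0 <= INR n * r n 0 * T n by apply: Rmult_le_pos; lra.
  split; first by apply: Rmult_lt_0_compat; lra.
  split.
  + have -> : T n * (1 - r n 0) * (INR n * r n 0 * (1 - T n)) =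
              INR n * r n 0 * T n * ((1 - T n) * (1 - r n 0)) by ring.
    exact: Rmult_le_compat_l cT lo.
  + have -> : T n * (INR n * r n 0 * (1 - T n)) = INR n * r n 0 * T n * (1 - T n) by ring.
    exact: Rmult_le_compat_l cT hi.
- by have := is_lim_seq_mult' _ _ _ _ T1 (is_lim_seq_one_sub r0); rewrite Rminus_0_r Rmult_1_l.
- exact: T1.
Qed.

Lemma asym_Var_X1_dense :
  is_lim_seq (fun n => r n 0) 1 -> is_lim_seq (fun n => r n 1) 1 ->
  asym (fun n => Expect (fun i => a i n) (fun S : Sample m n =>
          X1 S + INR (m - 1) * INR n - foldr Rplus 0 (map (fun i => INR (a i n)) (iota 0 m))))
       (fun n => V n).
Proof.
move=> r0 _; have r1 i : i \in [:: 0, 1 & J]%N -> is_lim_seq (fun n => r n i) 1.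
  move=> iJ; apply: (ratio_lim1 iJ r0).
  by apply: filter_imp eventually_coupon_ratios => n [_ _ /(_ i iJ) []].
have mu0 := is_lim_seq_inv_pred.
have s1 i : i \in [:: 0, 1 & J]%N -> is_lim_seq (fun n => s n i) 1.
  move=> iJ; apply: (@is_lim_seq_ext_loc (fun n => 1 - (1 + / (INR n - 1)) * (1 - r n i))).
    apply: filter_imp eventually_coupon_ratios => n [n1 s_def _].
    by rewrite s_def; field; lra.
  have := is_lim_seq_one_sub (is_lim_seq_mult' _ _ _ _
    (is_lim_seq_plus' _ _ _ _ (is_lim_seq_const 1) mu0) (is_lim_seq_one_sub (r1 i iJ))).
  by rewrite Rminus_diag Rmult_0_r Rminus_0_r.
have mu1 : is_lim_seq (fun n => 1 + / (INR n - 1)) 1.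
  by have := is_lim_seq_plus' _ _ _ _ (is_lim_seq_const 1) mu0; rewrite Rplus_0_r.
have P1 := is_lim_seq_prod1 r1; have Q1 := is_lim_seq_prod1 s1.
apply: (@asym_of_bounds _ _ (fun n => (1 + / (INR n - 1)) * P n * Q n)
                            (fun n => (1 + / (INR n - 1)) * P n)); last 2 first.
- exact: is_lim_seq_mult1 (is_lim_seq_mult1 mu1 P1) Q1.
- exact: is_lim_seq_mult1 mu1 P1.
apply: filter_imp (filter_and _ _ eventually_coupon_moments eventually_coupon_ratios).
move=> n [[D0 EX ->] [n1 s_def rng]].
have rs : {in [:: 0, 1 & J]%N, forall i, 0 <= s n i /\ r n i <= 1}.
  by move=> i /rng [[_ ?] ? _ _]; split; lra.
have [lo hi] := variance_factor_second_order n1 s_def rs.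
move: lo hi; set F := P n - 1 + _ => lo hi.
have r01 : {in [:: 0, 1 & J]%N, forall i, 0 <= r n i <= 1}.
  by move=> i /rng [[? ?] _ _ _]; split; lra.
have [[_ r0n] _ _ _] := rng 0%N isT; have [[_ r1n] _ _ _] := rng 1%N isT.
have F0 : 0 < F by apply: prodR_defect_gt0.
have xP : 0 <= INR n * P n by apply: Rmult_le_pos; [lra | have [] := prodR_in01 r01].
rewrite (@eq_Expect _ _ _ _ (fun S =>
    (INR (m - 1) * INR n - foldr Rplus 0 (map (fun i => INR (a i n)) (iota 0 m))) + 1 * X1 S));
  last by move=> S; ring.
have EF : INR (m - 1) * INR n - foldr Rplus 0 (map (fun i => INR (a i n)) (iota 0 m)) +
          1 * (INR n * P n) = INR n * F.
  have := @sum_one_sub_ratio _ [:: 0, 1 & J]%N (fun i => INR (a i n)) (INR n) ltac:(lra).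
  rewrite (_ : size _ = m); last by rewrite /= size_iota; lia.
  rewrite foldrE big_map iota_m INR_subn; last by lia.
  by rewrite /F => hs; rewrite Rmult_plus_distr_l hs [INR 1]/=; ring.
rewrite Expect_affine // EX EF; split; first by apply: Rmult_lt_0_compat; lra.
split.
- have -> : (1 + / (INR n - 1)) * P n * Q n * (INR n * F) =
            INR n * P n * ((1 + / (INR n - 1)) * Q n * F) by ring.
  exact: Rmult_le_compat_l xP lo.
- have -> : (1 + / (INR n - 1)) * P n * (INR n * F) =
            INR n * P n * ((1 + / (INR n - 1)) * F) by ring.
  exact: Rmult_le_compat_l xP hi.
Qed.

End CouponAsymptotics.

Local Close Scope R_scope.

Theorem lemma2 (m : nat) (a : nat -> nat -> nat)
  (Hm : (2 <= m)%N)
  (* (A2) *)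
  (HA2a : forall i, (i < m)%N -> cv_infty (fun n => INR (a i n)))
  (HA2b : forall i, (i < m)%N -> cv_infty (fun n => Rminus (INR n) (INR (a i n))))
  (* (A3), for all large n *)
  (HA3 : exists N, forall n, (N <= n)%N ->
           (1 <= a 0 n)%N /\
           (forall i, (i.+1 < m)%N -> (a i n <= a i.+1 n)%N) /\
           (a (m - 1) n <= n - 1)%N)
  (* (A4) *)
  (HA4 : forall i, (i < m)%N -> exists alpha : R,
           Rle R0 alpha /\ Rle alpha R1 /\
           Un_cv (fun n => Rdiv (INR (a i n)) (INR n)) alpha) :
  (* (i) *)
  ((Un_cv (fun n => Rdiv (INR (a 0 n)) (INR n)) R0 /\
    Un_cv (fun n => Rdiv (INR (a 1 n)) (INR n)) R0) ->
   asym (fun n => Expect (fun i => a i n) (@X1 m n))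
        (fun n => Var (fun i => a i n) (@X1 m n))) /\
  (* (ii) *)
  ((Un_cv (fun n => Rdiv (INR (a 0 n)) (INR n)) R0 /\
    Un_cv (fun n => Rdiv (INR (a 1 n)) (INR n)) R1) ->
   asym (fun n => Expect (fun i => a i n)
                    (fun S : Sample m n => Rminus (INR (a 0 n)) (X1 S)))
        (fun n => Var (fun i => a i n) (@X1 m n))) /\
  (* (iii) *)
  ((Un_cv (fun n => Rdiv (INR (a 0 n)) (INR n)) R1 /\
    Un_cv (fun n => Rdiv (INR (a 1 n)) (INR n)) R1) ->
   asym (fun n => Expect (fun i => a i n)
                    (fun S : Sample m n =>
                       Rminus (Rplus (X1 S) (Rmult (INR (m - 1)) (INR n)))
                              (foldr Rplus R0 (map (fun i => INR (a i n)) (iota 0 m)))))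
        (fun n => Var (fun i => a i n) (@X1 m n))).
Proof.
have adm : eventually (admissible m a).
  apply: eventually_admissible => //; first by lia.
  by case: HA3 => N HN; exists N => n /HN [_].
split; [|split] => -[/is_lim_seq_Reals r0 /is_lim_seq_Reals r1].
- exact: asym_Var_X1_sparse.
- exact: asym_Var_X1_mixed.
- exact: asym_Var_X1_dense.
Qed.
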